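(* Let $\Bbbk$ be a commutative ring of global dimension zero and let $C$ be a $\Bbbk$-coalgebra. The colinear Hattori--Stallings rank $[M]\mapsto \mathrm{tr}^C(\mathrm{id}_M)$ defines a homomorphism of abelian groups \[K_0(\mathrm{CoMod}_C^{\mathrm{fg}})\longrightarrow \mathrm{coHH}_0(C).\]
   Context: $\Bbbk$ is a finite product of fields; $\otimes=\otimes_\Bbbk$. $C=(C,\Delta,\varepsilon)$ is a coassociative counital $\Bbbk$-coalgebra and $\mathrm{coHH}_0(C)=\ker(\Delta-\tau\circ\Delta\colon C\to C\otimes C)$, $\tau$ the swap. $\mathrm{CoMod}_C^{\mathrm{fg}}$ is the category of right $C$-comodules that are finitely generated as $\Bbbk$-modules; $K_0(\mathrm{CoMod}_C^{\mathrm{fg}})$ is the free abelian group on isomorphism classes of such comodules modulo $[M]=[M']+[M'']$ for every short exact sequence $0\to M'\to M\to M''\to 0$ of right $C$-comodules in this category. For such $M$ with coaction $m\mapsto\sum m_{(0)}\otimes m_{(1)}$, a $\Bbbk$-basis $e_1,\dots,e_n$ and dual basis $e_i^*$, and a $C$-colinear $f\colon M\to M$, the colinear Hattori--Stallings trace is $\mathrm{tr}^C(f)=\sum_{i=1}^n\sum e_i^*(f(e_{i(0)}))\,e_{i(1)}\in C$, which lies in $\mathrm{coHH}_0(C)$; the rank of $M$ is $\mathrm{tr}^C(\mathrm{id}_M)$. *)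

From HB Require Import structures.
From mathcomp Require Import all_boot all_order all_algebra.
Set Implicit Arguments. Unset Strict Implicit. Unset Printing Implicit Defensive.
Import GRing.Theory.
Local Open Scope ring_scope.

(* "k is a commutative ring of global dimension zero", i.e. a finite product
   of fields: k has a complete family of pairwise orthogonal nonzero
   idempotents e_i such that each factor e_i k is a field (every nonzero
   element of e_i k is invertible in e_i k, whose unit is e_i). *)
Definition fin_prod_of_fields (k : comNzRingType) : Prop :=
  exists (n : nat) (e : 'I_n -> k),
    [/\ forall i, e i * e i = e i /\ e i != 0,
        forall i j, i != j -> e i * e j = 0,
        \sum_(i < n) e i = 1 &
        forall i x, e i * x != 0 -> exists y, e i * x * y = e i].

Section Defs.
Variable k : comNzRingType.

Definition klinear (U V : lmodType k) (f : U -> V) : Prop :=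
  forall (a : k) (u v : U), f (a *: u + v) = a *: f u + f v.

Definition kform (U : lmodType k) (f : U -> k) : Prop :=
  forall (a : k) (u v : U), f (a *: u + v) = a * f u + f v.

Definition bilinear_map (U V W : lmodType k) (b : U -> V -> W) : Prop :=
  (forall v, klinear (fun u => b u v)) /\ (forall u, klinear (b u)).

Definition trilinear_map (U V W X : lmodType k) (t : U -> V -> W -> X) : Prop :=
  [/\ forall v w, klinear (fun u => t u v w),
      forall u w, klinear (fun v => t u v w) &
      forall u v, klinear (t u v)].

(* Elements of U (x) V are represented by finite lists of pure tensors;
   two representations are equal in U (x) V iff every bilinear map agrees
   on them (universal property of the tensor product over k). *)
Definition teq2 (U V : lmodType k) (s t : seq (U * V)) : Prop :=
  forall (W : lmodType k) (b : U -> V -> W), bilinear_map b ->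
    \sum_(p <- s) b p.1 p.2 = \sum_(p <- t) b p.1 p.2.

Definition teq3 (U V W : lmodType k) (s t : seq ((U * V) * W)) : Prop :=
  forall (X : lmodType k) (b : U -> V -> W -> X), trilinear_map b ->
    \sum_(p <- s) b p.1.1 p.1.2 p.2 = \sum_(p <- t) b p.1.1 p.1.2 p.2.

Definition is_coalgebra (C : lmodType k) (D : C -> seq (C * C)) (eps : C -> k)
  : Prop :=
  [/\ forall (a : k) (u v : C),
        teq2 (D (a *: u + v)) ([seq (a *: p.1, p.2) | p <- D u] ++ D v),
      kform eps,
      forall c, teq3 [seq ((q.1, q.2), p.2) | p <- D c, q <- D p.1]
                     [seq ((p.1, q.1), q.2) | p <- D c, q <- D p.2],
      forall c, \sum_(p <- D c) eps p.1 *: p.2 = c &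
      forall c, \sum_(p <- D c) eps p.2 *: p.1 = c].

(* coHH_0(C) = ker(Delta - tau o Delta). *)
Definition in_coHH0 (C : lmodType k) (D : C -> seq (C * C)) (c : C) : Prop :=
  teq2 (D c) [seq (p.2, p.1) | p <- D c].

Variables (C : lmodType k) (D : C -> seq (C * C)) (eps : C -> k).

(* A right C-comodule which is finitely generated (projective) over k,
   together with a chosen finite dual basis (projective coordinate system)
   {e_i, e_i^*} : m = sum_i e_i^*(m) e_i. *)
Record fgComod := FgComod {
  cm_sort :> lmodType k;
  cm_rho : cm_sort -> seq (cm_sort * C);
  cm_rho_lin : forall (a : k) (u v : cm_sort),
      teq2 (cm_rho (a *: u + v)) ([seq (a *: p.1, p.2) | p <- cm_rho u] ++ cm_rho v);
  cm_coassoc : forall m,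
      teq3 [seq ((q.1, q.2), p.2) | p <- cm_rho m, q <- cm_rho p.1]
           [seq ((p.1, q.1), q.2) | p <- cm_rho m, q <- D p.2];
  cm_counit : forall m, \sum_(p <- cm_rho m) eps p.2 *: p.1 = m;
  cm_dim : nat;
  cm_gen : 'I_cm_dim -> cm_sort;
  cm_coord : 'I_cm_dim -> cm_sort -> k;
  cm_coord_lin : forall i, kform (cm_coord i);
  cm_dual_basis : forall m, \sum_(i < cm_dim) cm_coord i m *: cm_gen i = m
}.

Arguments cm_rho : clear implicits.
Arguments cm_dim : clear implicits.
Arguments cm_gen : clear implicits.
Arguments cm_coord : clear implicits.

Definition colinear (M N : fgComod) (f : M -> N) : Prop :=
  klinear f /\
  forall m, teq2 (cm_rho N (f m)) [seq (f p.1, p.2) | p <- cm_rho M m].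

Definition comod_iso (M N : fgComod) : Prop :=
  exists f : M -> N, colinear f /\ bijective f.

Definition comod_ses (M' M M'' : fgComod) : Prop :=
  exists (f : M' -> M) (g : M -> M''),
    [/\ colinear f, colinear g, injective f, (forall m'', exists m, g m = m'') &
        forall m, g m = 0 <-> exists m', f m' = m].

Definition tr_colin (M : fgComod) (f : M -> M) : C :=
  \sum_(i < cm_dim M) \sum_(p <- cm_rho M (f (cm_gen M i)))
     cm_coord M i p.1 *: p.2.
(* tr^C(f) = sum_i sum e_i^*(f(e_{i(0)})) e_{i(1)}; for f = id the two
   placements of f coincide. *)
Definition colin_rank (M : fgComod) : C := tr_colin (@id M).

(* Free abelian group on fg comodules: finite formal Z-combinations.
   K0 is its quotient by the subgroup K0rel generated by
   [M] - [N] for M ~= N (generators are isomorphism classes) and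
   [M] - [M'] - [M''] for short exact sequences. *)
Definition formal_sum := seq (int * fgComod).

Inductive K0rel : formal_sum -> Prop :=
| K0rel_nil : K0rel [::]
| K0rel_iso M N : comod_iso M N -> K0rel [:: (1 : int, M); (-1 : int, N)]
| K0rel_ses M' M M'' : comod_ses M' M M'' ->
    K0rel [:: (1 : int, M); (-1 : int, M'); (-1 : int, M'')]
| K0rel_add x y : K0rel x -> K0rel y -> K0rel (x ++ y)
| K0rel_opp x : K0rel x -> K0rel [seq (- p.1, p.2) | p <- x].

Definition rankZ (x : formal_sum) : C :=
  \sum_(p <- x) colin_rank p.2 *~ p.1.

End Defs.

From mathcomp Require Import all_boot all_order all_algebra.
Import GRing.Theory.
Local Open Scope ring_scope.
Set Implicit Arguments. Unset Strict Implicit. Unset Printing Implicit Defensive.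

(* Write the rank as tr^C(id_M) = sum_i (e_i^* (x) id) rho(e_i). As for
   ordinary traces, this sum is the same for every finite dual basis of M.
   An isomorphism transports dual bases, and a short exact sequence
   0 -> M' -> M -> M'' -> 0 splits k-linearly because M'' has a dual basis,
   so M gets a dual basis glued from those of M' and M''; colinearity of the
   maps then moves each term of the trace of M to a term of the trace of M' or
   M''. For cocommutativity, coassociativity of rho gives
   Delta(rank M) = sum_{i,j} e_j^*(e_{i(0)}) e_i^*(e_{j(0)}) e_{j(1)} (x) e_{i(1)},
   which is invariant under exchanging i, j together with the two tensor
   factors. Global dimension zero is only needed for finitely generated
   comodules to have a dual basis; here one is part of the data of an
   fgComod. *)

Section LinearMaps.
Variable k : comNzRingType.
Implicit Types U V W X : lmodType k.

Lemma klinear0 U V (f : U -> V) : klinear f -> f 0 = 0.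
Proof.
move=> hf; have := hf 1 0 0; rewrite !scale1r addr0 => h.
by apply: (addrI (f 0)); rewrite addr0 -h.
Qed.

Lemma klinearD U V (f : U -> V) : klinear f -> {morph f : u v / u + v}.
Proof. by move=> hf u v; have := hf 1 u v; rewrite !scale1r. Qed.

Lemma klinearZ U V (f : U -> V) a : klinear f -> {morph f : u / a *: u}.
Proof. by move=> hf u; have := hf a u 0; rewrite !addr0 klinear0 // addr0. Qed.

Lemma klinearB U V (f : U -> V) : klinear f -> {morph f : u v / u - v}.
Proof. by move=> hf u v; rewrite klinearD // -scaleN1r klinearZ // scaleN1r. Qed.

Lemma klinear_sum U V (f : U -> V) (I : Type) (r : seq I) (y : I -> U) :
  klinear f -> f (\sum_(i <- r) y i) = \sum_(i <- r) f (y i).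
Proof.
move=> hf; elim: r => [|i r IH]; first by rewrite !big_nil klinear0.
by rewrite !big_cons klinearD // IH.
Qed.

Lemma klinear_sumZ U V (f : U -> V) (I : Type) (r : seq I) (a : I -> k)
    (y : I -> U) :
  klinear f -> f (\sum_(i <- r) a i *: y i) = \sum_(i <- r) a i *: f (y i).
Proof. by move=> hf; rewrite klinear_sum //; apply: eq_bigr => i _; rewrite klinearZ. Qed.

Lemma kformZ U (f : U -> k) a u : kform f -> f (a *: u) = a * f u.
Proof. by move=> hf; exact: (@klinearZ U k^o f a hf u). Qed.

Lemma kform_sum U (f : U -> k) (I : Type) (r : seq I) (y : I -> U) :
  kform f -> f (\sum_(i <- r) y i) = \sum_(i <- r) f (y i).
Proof. exact: (@klinear_sum U k^o). Qed.

Lemma kform_comp U V (f : U -> V) (e : V -> k) :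
  klinear f -> kform e -> kform (e \o f).
Proof. by move=> hf he a u v /=; rewrite hf he. Qed.

Lemma bilinear_flip U V W (b : U -> V -> W) :
  bilinear_map b -> bilinear_map (fun v u => b u v).
Proof. by case. Qed.

Lemma bilinear_scale U V (e : U -> k) :
  kform e -> bilinear_map (fun (u : U) (v : V) => e u *: v).
Proof.
move=> he; split=> [v a x y|u a x y] /=; first by rewrite he scalerDl scalerA.
by rewrite scalerDr !scalerA mulrC.
Qed.

Lemma trilinear_scale U V W X (e : U -> k) (b : V -> W -> X) :
  kform e -> bilinear_map b -> trilinear_map (fun u v w => e u *: b v w).
Proof.
move=> he [hb1 hb2]; split=> [v w a x y|u w a x y|u v a x y] /=.
- by rewrite he scalerDl scalerA.
- by rewrite hb1 scalerDr !scalerA mulrC.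
- by rewrite hb2 scalerDr !scalerA mulrC.
Qed.

Lemma trilinear_fix3 U V W X (t : U -> V -> W -> X) w :
  trilinear_map t -> bilinear_map (fun u v => t u v w).
Proof. by case=> ht1 ht2 _; split=> [v|u]; [exact: ht1|exact: ht2]. Qed.

Definition tensor_rep_linear X U V (rho : X -> seq (U * V)) : Prop :=
  forall a x y, teq2 (rho (a *: x + y)) ([seq (a *: p.1, p.2) | p <- rho x] ++ rho y).

Lemma tensor_rep_eval_linear X U V W (rho : X -> seq (U * V)) (b : U -> V -> W) :
  tensor_rep_linear rho -> bilinear_map b ->
  klinear (fun x => \sum_(p <- rho x) b p.1 p.2).
Proof.
move=> hrho hb a x y; rewrite (hrho a x y W b hb) big_cat big_map /= scaler_sumr.
by congr (_ + _); apply: eq_bigr => p _; rewrite (klinearZ _ (hb.1 _)).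
Qed.

Definition dual_basis U (I : finType) (x : I -> U) (xi : I -> U -> k) : Prop :=
  (forall i, kform (xi i)) /\ (forall u, \sum_i xi i u *: x i = u).

Lemma dual_basis_form U (I : finType) (x : I -> U) xi (zeta : U -> k) u :
  dual_basis x xi -> kform zeta -> \sum_i zeta (x i) * xi i u = zeta u.
Proof.
case=> _ hx hzeta; rewrite -{2}(hx u) kform_sum //.
by apply: eq_bigr => i _; rewrite kformZ // mulrC.
Qed.

Lemma ses_split U V W (I : finType) (f : U -> V) (g : V -> W) (y : I -> W) zeta :
    klinear f -> klinear g -> injective f -> (forall w, exists v, g v = w) ->
    (forall v, g v = 0 <-> exists u, f u = v) -> dual_basis y zeta ->
  exists (r : V -> U) (s : W -> V), [/\ klinear r, klinear s,
    cancel f r, cancel s g & forall v, f (r v) + s (g v) = v].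
Proof.
move=> hf hg finj gsurj hker [hzeta hy].
have /fin_all_exists [v hv] : forall i, exists v, g v = y i by move=> i; exact: gsurj.
pose s w := \sum_i zeta i w *: v i.
have hs : klinear s.
  move=> a w w'; rewrite /s scaler_sumr -big_split; apply: eq_bigr => i _.
  by rewrite hzeta scalerDl scalerA.
have gs w : g (s w) = w.
  by rewrite klinear_sumZ // -{2}(hy w); apply: eq_bigr => i _; rewrite hv.
have hpre x : exists u, f u == x - s (g x).
  have [u hu] : exists u, f u = x - s (g x).
    by apply/hker; rewrite klinearB // gs subrr.
  by exists u; apply/eqP.
pose r x := xchoose (hpre x).
have fr x : f (r x) = x - s (g x) by exact/eqP/(xchooseP (hpre x)).
exists r, s; split=> //.
- move=> a x x'; apply: finj.
  by rewrite hf !fr hg hs scalerBr opprD addrACA.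
- move=> u /=; apply: finj; rewrite fr.
  have -> : g (f u) = 0 by apply/hker; exists u.
  by rewrite klinear0 // subr0.
- by move=> x; rewrite fr subrK.
Qed.

End LinearMaps.

Section ComoduleRank.
Variables (k : comNzRingType) (C : lmodType k).
Variables (D : C -> seq (C * C)) (eps : C -> k).
Local Notation comod := (fgComod D eps).
Local Notation gen M := (@cm_gen _ _ D eps M).
Local Notation crd M := (@cm_coord _ _ D eps M).

Definition coact_eval (M : comod) (xi : M -> k) (m : M) : C :=
  \sum_(p <- cm_rho m) xi p.1 *: p.2.

Lemma coact_eval_linear (M : comod) (xi : M -> k) :
  kform xi -> klinear (coact_eval xi).
Proof.
move=> hxi.
exact: (tensor_rep_eval_linear (@cm_rho_lin _ _ _ _ M) (bilinear_scale C hxi)).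
Qed.

Lemma eq_coact_eval (M : comod) (xi zeta : M -> k) :
  xi =1 zeta -> coact_eval xi =1 coact_eval zeta.
Proof. by move=> eq_xi m; apply: eq_bigr => p _; rewrite eq_xi. Qed.

Lemma coact_eval_sum (M : comod) (I : Type) (r : seq I) (a : I -> k)
    (xi : I -> M -> k) m :
  coact_eval (fun x => \sum_(i <- r) a i * xi i x) m =
  \sum_(i <- r) a i *: coact_eval (xi i) m.
Proof.
rewrite /coact_eval; under eq_bigr do rewrite scaler_suml.
rewrite exchange_big; apply: eq_bigr => i _; rewrite scaler_sumr.
by apply: eq_bigr => p _; rewrite scalerA.
Qed.

Lemma coact_eval_colinear (M N : comod) (f : M -> N) (eta : N -> k) m :
  colinear f -> kform eta -> coact_eval eta (f m) = coact_eval (eta \o f) m.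
Proof.
by move=> hf heta; rewrite /coact_eval (hf.2 m C _ (bilinear_scale C heta)) big_map.
Qed.

Lemma cm_dual_basisP (M : comod) : dual_basis (gen M) (crd M).
Proof. by split; [exact: cm_coord_lin|exact: cm_dual_basis]. Qed.

Lemma dual_basis_coact_trace (M : comod) (I J : finType) (x : I -> M) xi
    (y : J -> M) zeta :
    dual_basis x xi -> dual_basis y zeta ->
  \sum_i coact_eval (xi i) (x i) = \sum_j coact_eval (zeta j) (y j).
Proof.
move=> hx [hzeta hy]; have [hxi _] := hx.
transitivity (\sum_i \sum_j zeta j (x i) *: coact_eval (xi i) (y j)).
  apply: eq_bigr => i _.
  by rewrite -{1}(hy (x i)) (klinear_sumZ _ _ _ (coact_eval_linear (hxi i))).
rewrite exchange_big; apply: eq_bigr => j _.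
by rewrite -coact_eval_sum; apply: eq_coact_eval => m; rewrite dual_basis_form.
Qed.

Lemma colin_rank_dual_basis (M : comod) (I : finType) (x : I -> M) xi :
  dual_basis x xi -> colin_rank M = \sum_i coact_eval (xi i) (x i).
Proof. by move=> hx; rewrite (dual_basis_coact_trace hx (cm_dual_basisP M)). Qed.

Lemma colin_rank_iso (M N : comod) : comod_iso M N -> colin_rank M = colin_rank N.
Proof.
case=> f [hf [g fK gK]].
have hg : klinear g by move=> a u v; apply: (can_inj fK); rewrite gK hf.1 !gK.
have hbasis : dual_basis (g \o gen N) (fun j => crd N j \o f).
  split=> [j|m]; first exact: kform_comp hf.1 (cm_coord_lin j).
  by rewrite -(klinear_sumZ _ _ _ hg) cm_dual_basis fK.
rewrite (colin_rank_dual_basis hbasis); apply: eq_bigr => j _.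
by rewrite -coact_eval_colinear ?gK //; exact: cm_coord_lin.
Qed.

Lemma colin_rank_ses (M' M M'' : comod) : comod_ses M' M M'' ->
  colin_rank M = colin_rank M' + colin_rank M''.
Proof.
case=> f [g [hf hg finj gsurj hker]].
have [r [s [hr hs rK sK hrs]]] :=
  ses_split hf.1 hg.1 finj gsurj hker (cm_dual_basisP M'').
pose x u := match u with inl i => f (gen M' i) | inr j => s (gen M'' j) end.
pose xi u := match u with inl i => crd M' i \o r | inr j => crd M'' j \o g end.
have hbasis : dual_basis x xi.
  split=> [[i|j]|m]; [exact: kform_comp hr (cm_coord_lin i)|
                      exact: kform_comp hg.1 (cm_coord_lin j)|].
  rewrite big_sumType /= -(klinear_sumZ _ _ _ hf.1) -(klinear_sumZ _ _ _ hs).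
  by rewrite !cm_dual_basis hrs.
rewrite (colin_rank_dual_basis hbasis) big_sumType /=; congr (_ + _).
  apply: eq_bigr => i _; rewrite coact_eval_colinear //.
    by apply: eq_coact_eval => m /=; rewrite rK.
  exact: kform_comp hr (cm_coord_lin i).
by apply: eq_bigr => j _; rewrite -coact_eval_colinear ?sK //; exact: cm_coord_lin.
Qed.

Lemma coprod_coact_eval (M : comod) (W : lmodType k) (b : C -> C -> W)
    (e : M -> k) m :
    is_coalgebra D eps -> kform e -> bilinear_map b ->
  \sum_(q <- D (coact_eval e m)) b q.1 q.2 =
  \sum_(p <- cm_rho m) \sum_(q <- cm_rho p.1) e q.1 *: b q.2 p.2.
Proof.
case=> hD _ _ _ _ he hb; have ht := trilinear_scale he hb.
rewrite (klinear_sumZ _ _ _ (tensor_rep_eval_linear hD hb)).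
under eq_bigr do rewrite scaler_sumr.
rewrite -(big_allpairs_dep (h := fun p q => ((p.1, q.1), q.2))
                          (F := fun t => e t.1.1 *: b t.1.2 t.2)).
by rewrite -(cm_coassoc m ht) big_allpairs_dep.
Qed.

Definition rank_coprod (M : comod) (W : lmodType k) (b : C -> C -> W) : W :=
  \sum_i \sum_j \sum_(p <- cm_rho (gen M i)) \sum_(q <- cm_rho (gen M j))
     (crd M j p.1 * crd M i q.1) *: b q.2 p.2.

Lemma coprod_colin_rank (M : comod) (W : lmodType k) (b : C -> C -> W) :
    is_coalgebra D eps -> bilinear_map b ->
  \sum_(q <- D (colin_rank M)) b q.1 q.2 = rank_coprod M b.
Proof.
move=> hC hb; have [hD _ _ _ _] := hC.
rewrite (klinear_sum _ _ (tensor_rep_eval_linear hD hb)); apply: eq_bigr => i _.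
have hi := @cm_coord_lin _ _ D eps M i.
rewrite coprod_coact_eval // exchange_big; apply: eq_bigr => p _.
have hlin := tensor_rep_eval_linear (@cm_rho_lin _ _ _ _ M)
               (trilinear_fix3 p.2 (trilinear_scale hi hb)).
rewrite -[in LHS](cm_dual_basis p.1) (klinear_sumZ _ _ _ hlin) /=.
apply: eq_bigr => j _.
by rewrite scaler_sumr; apply: eq_bigr => q _; rewrite scalerA.
Qed.

Lemma rank_coprod_flip (M : comod) (W : lmodType k) (b : C -> C -> W) :
  rank_coprod M (fun x y => b y x) = rank_coprod M b.
Proof.
rewrite /rank_coprod exchange_big; apply: eq_bigr => i _; apply: eq_bigr => j _.
by rewrite exchange_big; do 2!apply: eq_bigr => ? _; rewrite mulrC.
Qed.

Lemma colin_rank_coHH0 (M : comod) :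
  is_coalgebra D eps -> in_coHH0 D (colin_rank M).
Proof.
move=> hC W b hb; rewrite big_map coprod_colin_rank //.
by rewrite (coprod_colin_rank _ hC (bilinear_flip hb)) rank_coprod_flip.
Qed.

Lemma rankZ_cat (x y : formal_sum D eps) : rankZ (x ++ y) = rankZ x + rankZ y.
Proof. exact: big_cat. Qed.

Lemma rankZ_opp (x : formal_sum D eps) :
  rankZ [seq (- p.1, p.2) | p <- x] = - rankZ x.
Proof. by rewrite /rankZ big_map -sumrN; apply: eq_bigr => p _; rewrite mulrNz. Qed.

End ComoduleRank.

Theorem theorem2p23 (k : comNzRingType) (hk : fin_prod_of_fields k)
  (C : lmodType k) (D : C -> seq (C * C)) (eps : C -> k)
  (hC : is_coalgebra D eps) :
  (forall M : fgComod D eps, in_coHH0 D (colin_rank M)) /\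
  (forall x : formal_sum D eps, K0rel x -> rankZ x = 0).
Proof.
split=> [M|x]; first exact: colin_rank_coHH0.
elim=> [|M N /colin_rank_iso eqMN|M' M M'' /colin_rank_ses eqM|y z _ IHy _ IHz|y _ IHy].
- exact: big_nil.
- by rewrite /rankZ !big_cons big_nil /= eqMN mulr1z mulrN1z addr0 subrr.
- by rewrite /rankZ !big_cons big_nil /= eqM mulr1z !mulrN1z addr0 -opprD subrr.
- by rewrite rankZ_cat IHy IHz addr0.
- by rewrite rankZ_opp IHy oppr0.
Qed.
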